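(* Let $(X,\|\cdot\|)$ be a strictly convex two-dimensional real normed space with closed unit ball $B_X$ and unit sphere $S_X$. Fix a basis $\{e_1,e_2\}$ of $X$ and write $(s,t)=se_1+te_2$. Let $\alpha>0$ be such that $(\alpha,1),(\alpha,-1)\in S_X$, and let $\delta>0$ be such that $(0,\delta)\in S_X$. Then $$B_X\cap\bigl(]\alpha,\infty[\times\mathbb R\bigr)\subset(\alpha,0)+\delta^{-1}\operatorname{int}(B_X)$$ and $$\bigl((\alpha,0)+\delta^{-1}B_X\bigr)\cap\bigl(]-\infty,\alpha[\times\mathbb R\bigr)\subset\operatorname{int}(B_X),$$ where $I\times\mathbb R$ denotes $\{(s,t):s\in I,\ t\in\mathbb R\}$.
   Context: A norm is strictly convex if the unit sphere contains no nondegenerate line segment. $\operatorname{int}$ denotes the interior, $]a,b[$ an open interval. *)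

From HB Require Import structures.
From mathcomp Require Import all_boot all_order all_algebra.
From mathcomp Require Import all_classical all_reals all_analysis.
Set Implicit Arguments. Unset Strict Implicit. Unset Printing Implicit Defensive.
Import Order.TTheory GRing.Theory Num.Theory.
Import numFieldNormedType.Exports.
Local Open Scope classical_set_scope.
Local Open Scope ring_scope.

Definition unit_ball (R : realType) (V : normedModType R) : set V :=
  [set x | `|x| <= 1].

Definition strictly_convex_norm (R : realType) (V : normedModType R) : Prop :=
  forall x y : V, x != y -> `|x| = 1 -> `|y| = 1 ->
    ~ (forall l : R, 0 <= l <= 1 -> `|(1 - l) *: x + l *: y| = 1).

Definition is_basis2 (R : realType) (V : normedModType R) (e1 e2 : V) : Prop :=
  (forall v : V, exists s t : R, v = s *: e1 + t *: e2) /\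
  (forall s t : R, s *: e1 + t *: e2 = 0 -> s = 0 /\ t = 0).

From HB Require Import structures.
From mathcomp Require Import all_boot all_order all_algebra.
From mathcomp Require Import all_classical all_reals all_analysis.
From mathcomp Require Import ring lra.
Import Order.TTheory GRing.Theory Num.Theory.
Import numFieldNormedType.Exports.
Local Open Scope classical_set_scope.
Local Open Scope ring_scope.

(* Strict convexity puts every open segment between two distinct points of the
   ball into its interior.  As (alpha, 1) and (alpha, -1) lie on the sphere,
   a point (alpha, tau) of the open ball has |tau| < 1, and the midpoint (0, 1)
   of (-alpha, 1) and (alpha, 1) gives |e2| = 1/delta < 1.  A point (s, t) of the
   ball with s > alpha, mixed with (0, delta) and (0, -delta), lands strictly
   inside the ball on the line s = alpha; this bounds |(s - alpha, t)| by 1/delta.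
   Conversely, for (p, q) in the ball with p < 0, the point
   (alpha + p/delta, q/delta) is a proper convex combination of (p, q) and a
   point of the segment {alpha} x [-1, 1]. *)

Section ConvexUnitBall.
Context {R : realType} {V : normedModType R}.

Lemma interior_unit_ball (y : V) : `|y| < 1 -> interior (@unit_ball R V) y.
Proof.
have -> : @unit_ball R V = closed_ball 0 1.
  by apply/funext => z; rewrite closed_ballE //= /closed_ball_ /= sub0r normrN.
by rewrite interior_closed_ballE // -ball_normE /ball_ /= sub0r normrN.
Qed.

Lemma normD_scale_le {a b : R} {x y : V} : 0 <= a -> 0 <= b ->
  `|a *: x + b *: y| <= a * `|x| + b * `|y|.
Proof.
move=> a0 b0; apply: le_trans (ler_normD _ _) _.
by rewrite !normrZ !ger0_norm.
Qed.

Lemma ball_comb_le1 {x y : V} {l : R} : 0 <= l <= 1 ->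
  `|x| <= 1 -> `|y| <= 1 -> `|(1 - l) *: x + l *: y| <= 1.
Proof.
move=> /andP[l0 l1] hx hy.
apply: le_trans (normD_scale_le _ _) _; [lra | lra |].
have : (1 - l) * `|x| <= 1 - l by rewrite ler_piMr // subr_ge0.
have : l * `|y| <= l by rewrite ler_piMr.
lra.
Qed.

Lemma ball_comb_lt1 {x y : V} {l : R} : 0 < l <= 1 ->
  `|x| <= 1 -> `|y| < 1 -> `|(1 - l) *: x + l *: y| < 1.
Proof.
move=> /andP[l0 l1] hx hy.
apply: le_lt_trans (normD_scale_le _ _) _; [lra | lra |].
have : (1 - l) * `|x| <= 1 - l by rewrite ler_piMr // subr_ge0.
have : l * `|y| < l by rewrite gtr_pMr.
lra.
Qed.

Lemma scale_comb_left (x y : V) (t a : R) :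
  (1 - t) *: x + t *: ((1 - a) *: x + a *: y) = (1 - t * a) *: x + (t * a) *: y.
Proof.
rewrite scalerDr !scalerA addrA -scalerDl; congr (_ *: _ + _); ring.
Qed.

Lemma scale_comb_right (x y : V) (t a : R) :
  (1 - t) *: y + t *: ((1 - a) *: x + a *: y)
  = (1 - (1 - t * (1 - a))) *: x + (1 - t * (1 - a)) *: y.
Proof.
rewrite scalerDr !scalerA addrCA -scalerDl; congr (_ *: _ + _ *: _); ring.
Qed.

(* A convex function that attains its maximum at an interior point is constant. *)
Lemma segment_norm_eq1 {x y : V} {l m : R} : `|x| <= 1 -> `|y| <= 1 ->
  0 < l < 1 -> `|(1 - l) *: x + l *: y| = 1 ->
  0 <= m <= 1 -> `|(1 - m) *: x + m *: y| = 1.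
Proof.
move=> hx hy /andP[l0 l1] hl /andP[m0 m1].
apply/eqP; rewrite eq_le ball_comb_le1 ?m0 ?m1 //= leNgt; apply/negP => hm.
have [hml | hlm] := lerP m l.
- pose t := (1 - l) / (1 - m).
  have mn1 : 1 - m != 0 by rewrite subr_eq0 gt_eqF //; lra.
  have tE : t * (1 - m) = 1 - l by rewrite /t divfK.
  have t01 : 0 < t <= 1 by rewrite /t divr_gt0 ?ler_pdivrMr /=; lra.
  have := ball_comb_lt1 t01 hy hm; rewrite scale_comb_right subKr tE subKr hl.
  by rewrite ltxx.
- pose t := l / m.
  have tE : t * m = l by rewrite /t divfK // gt_eqF //; lra.
  have t01 : 0 < t <= 1 by rewrite /t divr_gt0 ?ler_pdivrMr /=; lra.
  have := ball_comb_lt1 t01 hx hm; rewrite scale_comb_left tE hl.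
  by rewrite ltxx.
Qed.

Lemma strictly_convex_comb_lt1 {x y : V} {l : R} : strictly_convex_norm V ->
  `|x| <= 1 -> `|y| <= 1 -> x != y -> 0 < l < 1 ->
  `|(1 - l) *: x + l *: y| < 1.
Proof.
move=> SC hx hy xy /andP[l0 l1]; rewrite ltNge; apply/negP => hl1.
have hl : `|(1 - l) *: x + l *: y| = 1.
  by apply/eqP; rewrite eq_le hl1 ball_comb_le1 // (ltW l0) (ltW l1).
have hx1 : `|x| = 1.
  apply/eqP; rewrite eq_le hx leNgt; apply/negP => hxlt.
  have l01 : 0 < 1 - l <= 1 by lra.
  have := ball_comb_lt1 l01 hy hxlt.
  by rewrite subKr addrC hl ltxx.
have hy1 : `|y| = 1.
  apply/eqP; rewrite eq_le hy leNgt; apply/negP => hylt.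
  have l01 : 0 < l <= 1 by lra.
  by have := ball_comb_lt1 l01 hx hylt; rewrite hl ltxx.
apply: (SC x y xy hx1 hy1) => m m01.
by apply: (segment_norm_eq1 hx hy _ hl m01); rewrite l0 l1.
Qed.

End ConvexUnitBall.

Section Coordinates.
Context {R : realType} {V : normedModType R}.
Variables e1 e2 : V.

Definition vec2 (s t : R) : V := s *: e1 + t *: e2.

Lemma vec2D (s t s' t' : R) : vec2 s t + vec2 s' t' = vec2 (s + s') (t + t').
Proof. by rewrite /vec2 addrACA -!scalerDl. Qed.

Lemma vec2Z (k s t : R) : k *: vec2 s t = vec2 (k * s) (k * t).
Proof. by rewrite /vec2 scalerDr !scalerA. Qed.

Lemma vec2_e1D (a k s t : R) : a *: e1 + k *: vec2 s t = vec2 (a + k * s) (k * t).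
Proof. by rewrite vec2Z /vec2 addrA -scalerDl. Qed.

Hypothesis B : is_basis2 e1 e2.

Lemma vec2_inj (s t s' t' : R) : vec2 s t = vec2 s' t' -> s = s' /\ t = t'.
Proof.
move: B => [_ e12_free] E.
have : vec2 (s - s') (t - t') = 0.
  by rewrite -vec2D -[- s']mulN1r -[- t']mulN1r -vec2Z scaleN1r E subrr.
by move/e12_free => [/subr0_eq -> /subr0_eq ->].
Qed.

Variables (alpha delta : R).
Hypotheses (SC : strictly_convex_norm V)
  (alpha_gt0 : 0 < alpha) (delta_gt0 : 0 < delta)
  (norm_A : `|vec2 alpha 1| = 1) (norm_A' : `|vec2 alpha (-1)| = 1)
  (norm_D : `|vec2 0 delta| = 1).

Lemma norm_vec2_0 (t : R) : `|vec2 0 t| = `|t| / delta.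
Proof.
have norm_e2 : `|e2| = delta^-1.
  move: norm_D; rewrite /vec2 scale0r add0r normrZ gtr0_norm // => h.
  by rewrite -[delta^-1]mulr1 -h mulKf // gt_eqF.
by rewrite /vec2 scale0r add0r normrZ norm_e2.
Qed.

Lemma norm_vec2_alpha_le1 (tau : R) : `|tau| <= 1 -> `|vec2 alpha tau| <= 1.
Proof.
rewrite ler_norml => /andP[tau_ge tau_le].
have -> : vec2 alpha tau
    = (1 - (1 + tau) / 2) *: vec2 alpha (-1) + ((1 + tau) / 2) *: vec2 alpha 1.
  by rewrite !vec2Z vec2D; congr vec2; field.
by apply: ball_comb_le1; rewrite ?norm_A ?norm_A' //; apply/andP; split; lra.
Qed.

Lemma norm_vec2_alpha_ge1 {k sigma : R} : 1 <= k -> `|vec2 alpha sigma| = 1 ->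
  1 <= `|vec2 alpha (k * sigma)|.
Proof.
move=> k_ge1 norm_sigma; rewrite leNgt; apply/negP => hlt.
have k01 : 0 < k^-1 <= 1 by rewrite invr_gt0 invf_le1 /=; lra.
have norm_0 : `|vec2 alpha 0| <= 1 by rewrite norm_vec2_alpha_le1 ?normr0.
have := ball_comb_lt1 k01 norm_0 hlt.
have -> : (1 - k^-1) *: vec2 alpha 0 + k^-1 *: vec2 alpha (k * sigma)
    = vec2 alpha sigma.
  rewrite !vec2Z vec2D; congr vec2; field; rewrite gt_eqF //; lra.
by rewrite norm_sigma ltxx.
Qed.

Lemma norm_vec2_alpha_lt1 (tau : R) : `|vec2 alpha tau| < 1 -> `|tau| < 1.
Proof.
move=> hlt; rewrite ltNge; apply/negP => tau_ge1.
have [tau_ge0 | tau_lt0] := lerP 0 tau.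
- rewrite ger0_norm // in tau_ge1.
  by have := norm_vec2_alpha_ge1 tau_ge1 norm_A; rewrite mulr1 leNgt hlt.
- rewrite ltr0_norm // in tau_ge1.
  by have := norm_vec2_alpha_ge1 tau_ge1 norm_A'; rewrite mulrN1 opprK leNgt hlt.
Qed.

Lemma delta_inv_lt1 : delta^-1 < 1.
Proof.
have -> : delta^-1 = `|vec2 0 1| by rewrite norm_vec2_0 normr1 mul1r.
have -> : vec2 0 1 = (1 - 2^-1) *: vec2 (- alpha) 1 + 2^-1 *: vec2 alpha 1.
  by rewrite !vec2Z vec2D; congr vec2; field.
apply: strictly_convex_comb_lt1 => //.
- have -> : vec2 (- alpha) 1 = - vec2 alpha (-1).
    by rewrite -[- vec2 _ _]scaleN1r vec2Z; congr vec2; ring.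
  by rewrite normrN norm_A'.
- by rewrite norm_A.
- by apply/eqP => /vec2_inj [] alpha_eq _; move: alpha_gt0; lra.
- lra.
Qed.

Lemma norm_vec2_sub_alpha_lt1 (s t : R) : `|vec2 s t| <= 1 -> alpha < s ->
  delta * `|vec2 (s - alpha) t| < 1.
Proof.
move=> norm_st alpha_lt_s.
have s_gt0 : 0 < s by move: alpha_gt0; lra.
pose w := (s - alpha) / s; pose u := t * alpha / s.
have w01 : 0 < w < 1 by rewrite /w divr_gt0 ?ltr_pdivrMr /=; move: alpha_gt0; lra.
have side (d : R) : `|d| = delta -> `|u + w * d| < 1.
  move=> norm_d; apply: norm_vec2_alpha_lt1.
  have -> : vec2 alpha (u + w * d) = (1 - w) *: vec2 s t + w *: vec2 0 d.
    by rewrite !vec2Z vec2D /u /w; congr vec2; field; rewrite gt_eqF.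
  apply: strictly_convex_comb_lt1 => //.
    by rewrite norm_vec2_0 norm_d divff // gt_eqF.
  by apply/eqP => /vec2_inj [] s_eq _; move: s_gt0; rewrite s_eq ltxx.
have u_wdelta : `|u| + w * delta < 1.
  move: (side (- delta)) (side _ (gtr0_norm delta_gt0)).
  rewrite normrN gtr0_norm // => /(_ erefl); rewrite !ltr_norml mulrN.
  by case: (lerP 0 u) => [/ger0_norm|/ltr0_norm] ->; lra.
have -> : vec2 (s - alpha) t = vec2 0 u + w *: vec2 s t.
  by rewrite vec2Z vec2D /u /w; congr vec2; field; rewrite gt_eqF.
have norm_le : `|vec2 0 u + w *: vec2 s t| <= `|u| / delta + w.
  apply: le_trans (ler_normD _ _) _.
  have /andP[w_gt0 w_lt1] := w01.
  by rewrite norm_vec2_0 [`|w *: _|]normrZ (gtr0_norm w_gt0) lerD2l ler_piMr // ltW.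
apply: le_lt_trans (_ : delta * (`|u| / delta + w) < 1).
  by rewrite ler_pM2l.
by rewrite mulrDr mulrCA divff ?gt_eqF // mulr1 mulrC.
Qed.

Lemma norm_vec2_abs_alpha (q : R) : `|vec2 (`|q| * alpha) q| = `|q|.
Proof.
have [q_ge0 | q_lt0] := lerP 0 q.
- have -> : vec2 (`|q| * alpha) q = q *: vec2 alpha 1.
    by rewrite vec2Z ger0_norm // mulr1.
  by rewrite normrZ norm_A mulr1.
- have -> : vec2 (`|q| * alpha) q = (- q) *: vec2 alpha (-1).
    by rewrite vec2Z ltr0_norm // mulrN1 opprK.
  by rewrite normrZ norm_A' mulr1 normrN.
Qed.

(* [vec2 0 q] lies on the segment from [vec2 p q] to [vec2 (`|q| * alpha) q]. *)
Lemma delta_inv_weight_le {p q : R} : p < 0 -> `|vec2 p q| <= 1 ->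
  delta^-1 * (`|q| * alpha - p) <= alpha - p.
Proof.
move=> p_lt0 norm_pq; have dinv_lt1 := delta_inv_lt1.
have mp_gt0 : 0 < - p by rewrite oppr_gt0.
have ra_ge0 : 0 <= `|q| * alpha by rewrite mulr_ge0 // ltW.
have [q0 | q_neq0] := eqVneq `|q| 0.
  by rewrite q0 mul0r add0r; move: alpha_gt0; nra.
have q_gt0 : 0 < `|q| by rewrite lt_neqAle eq_sym q_neq0 normr_ge0.
have E : (`|q| * alpha - p) *: vec2 0 q
    = (`|q| * alpha) *: vec2 p q + (- p) *: vec2 (`|q| * alpha) q.
  by rewrite !vec2Z vec2D; congr vec2; ring.
have := normD_scale_le (x := vec2 p q) (y := vec2 (`|q| * alpha) q)
  ra_ge0 (ltW mp_gt0).
rewrite -E normrZ norm_vec2_0 norm_vec2_abs_alpha ger0_norm; last first.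
  by rewrite subr_ge0 (le_trans (ltW p_lt0)).
have := ler_piMr ra_ge0 norm_pq.
rewrite -(ler_pM2l q_gt0); nra.
Qed.

Lemma norm_vec2_shift_lt1 (p q : R) : `|vec2 p q| <= 1 -> p < 0 ->
  `|vec2 (alpha + delta^-1 * p) (delta^-1 * q)| < 1.
Proof.
move=> norm_pq p_lt0.
have weight_le := delta_inv_weight_le p_lt0 norm_pq.
have dinv_lt1 := delta_inv_lt1.
have dinv_gt0 : 0 < delta^-1 by rewrite invr_gt0.
have ap_gt0 : 0 < alpha - p by move: alpha_gt0; lra.
have acp_gt0 : 0 < alpha - p + delta^-1 * p by move: alpha_gt0; nra.
pose kappa := - (delta^-1 * p) / (alpha - p).
pose tau := q * delta^-1 * alpha / (alpha - p + delta^-1 * p).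
have kappa01 : 0 < kappa < 1.
  rewrite /kappa divr_gt0 ?ltr_pdivrMr /=; nra.
have tau_le1 : `|tau| <= 1.
  have /andP[q_lb q_ub] : - `|q| <= q <= `|q| by rewrite -ler_norml.
  have da_gt0 : 0 < delta^-1 * alpha by rewrite mulr_gt0.
  rewrite ler_norml /tau ler_pdivlMr // ler_pdivrMr // mul1r mulN1r; nra.
have -> : vec2 (alpha + delta^-1 * p) (delta^-1 * q)
    = (1 - kappa) *: vec2 alpha tau + kappa *: vec2 p q.
  have delta_gt1 : 1 < delta by rewrite -invf_lt1.
  have ad_gt0 : 0 < (alpha - p) * delta + p by move: alpha_gt0; nra.
  by rewrite !vec2Z vec2D /kappa /tau; congr vec2; field; rewrite !gt_eqF.
apply: strictly_convex_comb_lt1 => //; first exact: norm_vec2_alpha_le1.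
by apply/eqP => /vec2_inj [] alpha_eq _; move: alpha_gt0 p_lt0; rewrite alpha_eq; lra.
Qed.

End Coordinates.

Theorem proposition2p6 (R : realType) (V : normedModType R) (e1 e2 : V)
  (alpha delta : R) :
  @strictly_convex_norm R V ->
  is_basis2 e1 e2 ->
  0 < alpha ->
  `|alpha *: e1 + 1 *: e2| = 1 ->
  `|alpha *: e1 + (-1) *: e2| = 1 ->
  0 < delta ->
  `|0 *: e1 + delta *: e2| = 1 ->
  (forall s t : R, @unit_ball R V (s *: e1 + t *: e2) -> alpha < s ->
     exists2 y : V, interior (@unit_ball R V) y &
       s *: e1 + t *: e2 = alpha *: e1 + delta^-1 *: y) /\
  (forall (y : V) (s t : R), @unit_ball R V y ->
     alpha *: e1 + delta^-1 *: y = s *: e1 + t *: e2 -> s < alpha ->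
     interior (@unit_ball R V) (alpha *: e1 + delta^-1 *: y)).
Proof.
move=> SC B alpha_gt0 norm_A norm_A' delta_gt0 norm_D; split.
- move=> s t norm_st alpha_lt_s.
  exists (delta *: vec2 e1 e2 (s - alpha) t).
    apply: interior_unit_ball; rewrite normrZ gtr0_norm //.
    exact: norm_vec2_sub_alpha_lt1.
  by rewrite vec2Z vec2_e1D; congr vec2; field; rewrite gt_eqF.
- move=> y s t norm_y; have [p [q y_eq]] := proj1 B y; subst y.
  rewrite -/(vec2 e1 e2 p q) vec2_e1D => /vec2_inj [] // s_eq _ s_lt_alpha.
  apply: interior_unit_ball; apply: norm_vec2_shift_lt1 => //.
  by move: s_lt_alpha; rewrite -s_eq -ltrBrDl subrr pmulr_rlt0 // invr_gt0.
Qed.
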